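(* Let $p\ge1$, $m=2p$, $j=\mathrm{diag}(I_p,-I_p)$, $n>0$. Let $A$ be an $n\times n$ matrix with $\det A\neq0$, $S_0=S_0^*$ an $n\times n$ matrix and $\Pi_0$ an $n\times m$ matrix with $AS_0-S_0A^*=i\Pi_0j\Pi_0^*$. Define for $k\ge0$ $$\Pi_{k+1}=\Pi_k+iA^{-1}\Pi_kj,\qquad S_{k+1}=S_k+A^{-1}S_k(A^* )^{-1}+A^{-1}\Pi_k\Pi_k^*(A^* )^{-1}.$$ Suppose $\det S_r\neq0$ for $0\le r\le N$. Put $C_k=I_m+\Pi_k^*S_k^{-1}\Pi_k-\Pi_{k+1}^*S_{k+1}^{-1}\Pi_{k+1}$ for $0\le k<N$, and let $W_k(\lambda)$ be the solution of $W_{k+1}(\lambda)-W_k(\lambda)=-\frac{i}{\lambda}jC_kW_k(\lambda)$ with $W_0(\lambda)=I_m$. Then for $0\le k<N$ $$W_{k+1}(\lambda)=w_A(k+1,\lambda)\Big(I_m-\frac{i}{\lambda}j\Big)^{k+1}w_A(0,\lambda)^{-1},$$ where $w_A(k,\lambda)=I_m-ij\Pi_k^*S_k^{-1}(A-\lambda I_n)^{-1}\Pi_k$.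
   Context: $I_r$ denotes the $r\times r$ identity matrix; $\lambda$ is a complex parameter (the identity holds as meromorphic matrix functions of $\lambda$). *)

From mathcomp Require Import all_boot all_order all_algebra.
Set Implicit Arguments. Unset Strict Implicit. Unset Printing Implicit Defensive.
Import GRing.Theory Num.Theory.
Local Open Scope ring_scope.

Definition ctrmx (C : numClosedFieldType) (r c : nat) (A : 'M[C]_(r, c)) : 'M[C]_(c, r) :=
  (map_mx Num.conj A)^T.

Definition jmx (C : numClosedFieldType) (p : nat) : 'M[C]_(p + p) :=
  block_mx 1%:M 0 0 (- 1%:M).

Section Seqs.
Variables (C : numClosedFieldType) (n p : nat).
Variables (A : 'M[C]_n) (S0 : 'M[C]_n) (Pi0 : 'M[C]_(n, p + p)).

Fixpoint Pik (k : nat) : 'M[C]_(n, p + p) :=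
  match k with
  | 0 => Pi0
  | k'.+1 => Pik k' + 'i *: (invmx A *m Pik k' *m jmx C p)
  end.

Fixpoint Sk (k : nat) : 'M[C]_n :=
  match k with
  | 0 => S0
  | k'.+1 => Sk k' + invmx A *m Sk k' *m invmx (ctrmx A)
             + invmx A *m Pik k' *m ctrmx (Pik k') *m invmx (ctrmx A)
  end.

Definition Ck (k : nat) : 'M[C]_(p + p) :=
  1%:M + ctrmx (Pik k) *m invmx (Sk k) *m Pik k
  - ctrmx (Pik k.+1) *m invmx (Sk k.+1) *m Pik k.+1.

Fixpoint Wk (k : nat) (l : C) : 'M[C]_(p + p) :=
  match k with
  | 0 => 1%:M
  | k'.+1 => Wk k' l - ('i / l) *: (jmx C p *m Ck k' *m Wk k' l)
  end.

Definition wA (k : nat) (l : C) : 'M[C]_(p + p) :=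
  1%:M - 'i *: (jmx C p *m ctrmx (Pik k) *m invmx (Sk k) *m invmx (A - l%:M) *m Pik k).

End Seqs.

(* k-th power of a square matrix (matrices 'M_(p+p) carry no canonical ring
   structure since p + p is not syntactically a successor). *)
Definition mxpow (C : numClosedFieldType) (m : nat) (M : 'M[C]_m) (k : nat) : 'M[C]_m :=
  iter k (fun X => M *m X) 1%:M.

(* The displacement identity A S_k - S_k A^* = i Pi_k j Pi_k^* propagates along
   the recursion, and with it the one-step identity
     (A + A^-1) S_k = S_{k+1} A^* + i Pi_{k+1} j Pi_k^*.
   Multiplying on the right by S_k shows that X_k := j Pi_k^* S_k^-1 satisfies
     X_{k+1} (A + A^-1) + i (j C_k) X_k = X_k A.
   Since (A - l)^-1 commutes with A + A^-1 and l (A - l)^-1 = (A - l)^-1 A - 1,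
   this yields w_A(k+1, l) (1 - (i/l) j) = (1 - (i/l) j C_k) w_A(k, l),
   and the formula for W_{k+1} follows by telescoping from W_0 = 1. *)

From mathcomp Require Import all_boot all_order all_algebra ssrAC.
Import GRing.Theory Num.Theory.
Set Implicit Arguments. Unset Strict Implicit. Unset Printing Implicit Defensive.
Local Open Scope ring_scope.

Section ConjugateTranspose.
Variable C : numClosedFieldType.

Lemma ctrmxM r c q (X : 'M[C]_(r, c)) (Y : 'M[C]_(c, q)) :
  ctrmx (X *m Y) = ctrmx Y *m ctrmx X.
Proof. by rewrite /ctrmx map_mxM trmx_mul. Qed.

Lemma ctrmxD r c (X Y : 'M[C]_(r, c)) : ctrmx (X + Y) = ctrmx X + ctrmx Y.
Proof. by rewrite /ctrmx map_mxD linearD. Qed.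

Lemma ctrmxZ r c a (X : 'M[C]_(r, c)) : ctrmx (a *: X) = a^* *: ctrmx X.
Proof. by rewrite /ctrmx map_mxZ linearZ. Qed.

Lemma ctrmxV r (X : 'M[C]_r) : ctrmx (invmx X) = invmx (ctrmx X).
Proof. by rewrite /ctrmx map_invmx trmx_inv. Qed.

Lemma unitmx_ctrmx r (X : 'M[C]_r) : (ctrmx X \in unitmx) = (X \in unitmx).
Proof. by rewrite /ctrmx unitmx_tr map_unitmx. Qed.

Lemma ctrmx_jmx p : ctrmx (jmx C p) = jmx C p.
Proof.
rewrite /ctrmx /jmx map_block_mx tr_block_mx !map_mx0 map_mxN !map_mx1 !trmx0.
by rewrite linearN /= !trmx1.
Qed.

Lemma mulmx_jmx p : jmx C p *m jmx C p = 1%:M.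
Proof.
rewrite /jmx mulmx_block !mulmx0 !mul0mx !addr0 !add0r mulmx1 mulmxN mulmx1 opprK.
by rewrite -scalar_mx_block.
Qed.

End ConjugateTranspose.

Lemma comm_mxV (R : comUnitRingType) n (f g : 'M[R]_n) :
  g \in unitmx -> comm_mx f g -> comm_mx f (invmx g).
Proof.
move=> g_unit fg; rewrite /comm_mx -[LHS]mul1mx -(mulVmx g_unit) -mulmxA.
by rewrite (mulmxA g) -fg -mulmxA mulmxV // mulmx1.
Qed.

Lemma scaleCii (C : numClosedFieldType) (V : lmodType C) (x : V) :
  'i *: ('i *: x) = - x.
Proof. by rewrite scalerA mulCii scaleN1r. Qed.

Section DisplacementStep.
Variables (C : numClosedFieldType) (m n : nat).
Variables (A S : 'M[C]_n) (P : 'M[C]_(n, m)) (J : 'M[C]_m).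
Hypotheses (A_unit : A \in unitmx) (J_herm : ctrmx J = J) (J_invol : J *m J = 1%:M).
Hypothesis displacement : A *m S - S *m ctrmx A = 'i *: (P *m J *m ctrmx P).

Local Notation B := (invmx A).
Local Notation Ad := (ctrmx A).
Local Notation Bd := (invmx (ctrmx A)).
Local Notation P' := (P + 'i *: (B *m P *m J)).
Local Notation S' := (S + B *m S *m Bd + B *m P *m ctrmx P *m Bd).

Let Ad_unit : Ad \in unitmx. Proof. by rewrite unitmx_ctrmx. Qed.
Let mulmxJJ k (U : 'M[C]_(k, m)) : U *m J *m J = U.
Proof. by rewrite -mulmxA J_invol mulmx1. Qed.

Lemma ctrmx_step : ctrmx P' = ctrmx P - 'i *: (J *m ctrmx P *m Bd).
Proof. by rewrite ctrmxD ctrmxZ !ctrmxM conjCi ctrmxV J_herm scaleNr mulmxA. Qed.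

Lemma displacement_invmx : 'i *: (B *m P *m J *m ctrmx P *m Bd) = S *m Bd - B *m S.
Proof.
have := congr1 (fun M => B *m M *m Bd) displacement => /=.
rewrite mulmxBr mulmxBl !mulmxA mulVmx // mul1mx mulmxK // => ->.
by rewrite -scalemxAr -scalemxAl !mulmxA.
Qed.

Lemma displacement_step : A *m S' - S' *m Ad = 'i *: (P' *m J *m ctrmx P').
Proof.
rewrite ctrmx_step !mulmxDr !mulmxDl ?mulmxBr ?mulmxBl -?scalemxAl -?scalemxAr.
rewrite ?mulmxA ?mulmxN -?scalemxAr ?mulmxA mulmxV // !mul1mx !mulmxKV // !mulmxJJ.
rewrite !scalerDr ?scalerN !scaleCii ?opprK -displacement displacement_invmx.
by rewrite !opprD !addrA (ACl (1*4*6*3*2*5)).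
Qed.

Lemma mul_addinv_S : (A + B) *m S = S' *m Ad + 'i *: (P' *m J *m ctrmx P).
Proof.
rewrite !mulmxDl -!mulmxA mulVmx // !mulmx1 -scalemxAl -!mulmxA (mulmxA J) J_invol mul1mx.
rewrite scalerDr scaleCii !mulmxA -displacement !addrA.
by rewrite (ACl ((1*5)*(3*6)*4*2)) /= !subrr !add0r addrC.
Qed.

Lemma mulmx_J_ctrmx_step : J *m ctrmx P' *m Ad = J *m ctrmx P *m Ad - 'i *: ctrmx P.
Proof.
rewrite ctrmx_step mulmxBr mulmxBl -!scalemxAr -!scalemxAl !mulmxA J_invol mul1mx.
by rewrite mulmxKV.
Qed.

Hypotheses (S_unit : S \in unitmx) (S'_unit : S' \in unitmx).

Local Notation X := (J *m ctrmx P *m invmx S).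
Local Notation X' := (J *m ctrmx P' *m invmx S').
Local Notation G := (J + X *m P - X' *m P').

Lemma intertwine_step : X' *m (A + B) + 'i *: (G *m X) = X *m A.
Proof.
apply: (can_inj (mulmxK S_unit)) => /=.
have AS : A *m S = S *m Ad + 'i *: (P *m J *m ctrmx P) by rewrite -displacement addrC subrK.
rewrite mulmxDl -(mulmxA X') mul_addinv_S mulmxDr mulmxA mulmxKV // mulmx_J_ctrmx_step.
rewrite -scalemxAl -scalemxAr -(mulmxA _ X S) mulmxKV // mulmxBl (mulmxDl J).
rewrite (mulmxA J J) J_invol mul1mx.
rewrite -(mulmxA X A S) AS mulmxDr (mulmxA X S) mulmxKV // -scalemxAr.
rewrite !mulmxA scalerBr scalerDr !addrA.
by rewrite (ACl ((1*5)*(4*2)*(3*6))) /= !subrr !addr0.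
Qed.

Variable l : C.
Hypotheses (l_neq0 : l != 0) (Al_unit : A - l%:M \in unitmx).

Local Notation R := (invmx (A - l%:M)).

Let comm_A_R : comm_mx A R.
Proof. exact/comm_mxV/comm_mxB/comm_mx_scalar. Qed.

Let comm_B_R : comm_mx B R.
Proof.
apply/comm_mxV/comm_mxB/comm_mx_scalar => //.
by rewrite /comm_mx mulVmx ?mulmxV.
Qed.

Let scale_l_resolvent k q (U : 'M[C]_(k, n)) (V : 'M[C]_(n, q)) :
  l *: (U *m R *m V) = U *m R *m A *m V - U *m V.
Proof.
have lR : l *: R = R *m A - 1%:M.
  by rewrite -(mulVmx Al_unit) mulmxBr mul_mx_scalar opprB addrCA subrr addr0.
by rewrite scalemxAl scalemxAr lR mulmxBr mulmxBl mulmx1 mulmxA.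
Qed.

Lemma intertwine_resolvent :
  X' *m R *m (A + B) *m P = X *m R *m A *m P - 'i *: (G *m X *m R *m P).
Proof.
rewrite -(mulmxA X R A) -comm_A_R mulmxA -intertwine_step !mulmxDl -!scalemxAl.
have comm_R_AB : R *m (A + B) = (A + B) *m R.
  by rewrite mulmxDr mulmxDl comm_A_R comm_B_R.
by rewrite -(mulmxA X' R) comm_R_AB !mulmxA !mulmxDl !mulNmx ?mulmxA addrK.
Qed.

Lemma wA_intertwine :
  (1%:M - 'i *: (X' *m R *m P')) *m (1%:M - ('i / l) *: J) =
  (1%:M - ('i / l) *: G) *m (1%:M - 'i *: (X *m R *m P)).
Proof.
have li : l * ('i / l) = 'i by rewrite mulrC divfK.
have AP' : A *m P' = A *m P + 'i *: (P *m J).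
  by rewrite mulmxDr -scalemxAr !mulmxA mulmxV // mul1mx.
have P'J : P' *m J = P *m J + 'i *: (B *m P).
  by rewrite mulmxDl -scalemxAl mulmxJJ.
have lhs_l : l *: ((1%:M - 'i *: (X' *m R *m P')) *m (1%:M - ('i / l) *: J)) =
    l%:M - 'i *: J + 'i *: (X' *m P') - 'i *: (X' *m R *m (A + B) *m P).
  rewrite mulmxBl mul1mx mulmxBr mulmx1 -scalemxAl -scalemxAr scalerA.
  rewrite !scalerBr scalerA li.
  rewrite (scalerA l 'i) (mulrC l 'i) -(scalerA 'i l) scale_l_resolvent.
  rewrite !scalerA mulrCA li mulCii scaleN1r scalemx1.
  rewrite -(mulmxA (X' *m R) A) -(mulmxA (X' *m R) P') AP' P'J.
  rewrite !(mulmxDr (X' *m R)).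
  rewrite -!scalemxAr !mulmxA mulmxDl.
  rewrite !scalerDr ?scalerN !scaleCii ?opprD ?opprK !addrA.
  by rewrite (ACl (1*2*5*3*7*(4*6))) /= subrr addr0.
set JC := G.
have rhs_l : l *: ((1%:M - ('i / l) *: JC) *m (1%:M - 'i *: (X *m R *m P))) =
   l%:M - 'i *: J + 'i *: (X' *m P') - 'i *: (X *m R *m A *m P) - JC *m X *m R *m P.
  rewrite mulmxBl mul1mx mulmxBr mulmx1 -scalemxAl -scalemxAr scalerA.
  rewrite !scalerBr (scalerA l 'i) (mulrC l 'i) -(scalerA 'i l) scale_l_resolvent.
  rewrite !scalerA li mulrA li mulCii scaleN1r scalemx1 !mulmxA.
  rewrite ?scalerDr ?scalerBr ?scalerN ?opprD ?opprK !addrA.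
  by rewrite (ACl (1*4*6*2*7*(3*5))) /= subrr addr0.
apply: (scalerI l_neq0).
rewrite lhs_l rhs_l intertwine_resolvent -/JC.
by rewrite scalerBr scaleCii opprK opprD addrA.
Qed.

End DisplacementStep.

Section Recursion.
Variables (C : numClosedFieldType) (p n : nat).
Variables (A S0 : 'M[C]_n) (Pi0 : 'M[C]_(n, p + p)).

Local Notation Pi := (Pik A Pi0).
Local Notation S := (Sk A S0 Pi0).
Local Notation j := (jmx C p).

Lemma WkS k (l : C) :
  Wk A S0 Pi0 k.+1 l = (1%:M - ('i / l) *: (j *m Ck A S0 Pi0 k)) *m Wk A S0 Pi0 k l.
Proof. by rewrite /= mulmxBl mul1mx -scalemxAl. Qed.

Hypotheses (A_unit : A \in unitmx)
  (displacement0 : A *m S0 - S0 *m ctrmx A = 'i *: (Pi0 *m j *m ctrmx Pi0)).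

Lemma displacement_Sk k : A *m S k - S k *m ctrmx A = 'i *: (Pi k *m j *m ctrmx (Pi k)).
Proof.
elim: k => [|k IHk] //.
exact: displacement_step A_unit (ctrmx_jmx C p) (mulmx_jmx C p) IHk.
Qed.

Lemma wA_step k (l : C) :
  S k \in unitmx -> S k.+1 \in unitmx -> l != 0 -> A - l%:M \in unitmx ->
  wA A S0 Pi0 k.+1 l *m (1%:M - ('i / l) *: j) =
  (1%:M - ('i / l) *: (j *m Ck A S0 Pi0 k)) *m wA A S0 Pi0 k l.
Proof.
move=> Sk_unit SkS_unit l_neq0 Al_unit.
have -> : j *m Ck A S0 Pi0 k = j + j *m ctrmx (Pi k) *m invmx (S k) *m Pi k
    - j *m ctrmx (Pi k.+1) *m invmx (S k.+1) *m Pi k.+1.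
  by rewrite /Ck mulmxBr mulmxDr mulmx1 !mulmxA.
exact (wA_intertwine A_unit (ctrmx_jmx C p) (mulmx_jmx C p) (displacement_Sk k)
  Sk_unit SkS_unit l_neq0 Al_unit).
Qed.

End Recursion.

Theorem theorem2p2 (C : numClosedFieldType) (p n N : nat)
  (A S0 : 'M[C]_n) (Pi0 : 'M[C]_(n, p + p)) :
  (0 < p)%N -> (0 < n)%N ->
  A \in unitmx ->
  ctrmx S0 = S0 ->
  A *m S0 - S0 *m ctrmx A = 'i *: (Pi0 *m jmx C p *m ctrmx Pi0) ->
  (forall r, (r <= N)%N -> Sk A S0 Pi0 r \in unitmx) ->
  forall k, (k < N)%N ->
  forall l : C, l != 0 -> (A - l%:M) \in unitmx ->
    wA A S0 Pi0 0 l \in unitmx ->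
    Wk A S0 Pi0 k.+1 l =
      wA A S0 Pi0 k.+1 l *m mxpow (1%:M - ('i / l) *: jmx C p) k.+1
        *m invmx (wA A S0 Pi0 0 l).
Proof.
move=> _ _ A_unit _ displacement0 S_unit k k_lt_N l l_neq0 Al_unit w0_unit.
suff W_eq r : (r <= N)%N -> Wk A S0 Pi0 r l =
    wA A S0 Pi0 r l *m mxpow (1%:M - ('i / l) *: jmx C p) r *m invmx (wA A S0 Pi0 0 l).
  exact: W_eq.
elim: r => [_|r IHr r_lt_N]; first by rewrite /= mulmx1 mulmxV.
rewrite WkS IHr ?(ltnW r_lt_N) // !mulmxA.
by rewrite -(wA_step A_unit displacement0) ?S_unit ?(ltnW r_lt_N).
Qed.
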